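(* Let $b\in(0,1)$ be a dyadic rational with exactly $n\ge 2$ binary digits, i.e. $b=0.b_2b_3\cdots b_{n-1}1$ in base $2$. Then $$\mathrm{ext}(P_b)=\mathrm{ext}(P_{b-2^{1-n}})+\mathrm{ext}(P_{b+2^{1-n}}),$$ with the convention $\mathrm{ext}(P_1)=0$.
   Context: For a finite poset $P$, $\mathrm{ext}(P)$ denotes the number of linear extensions of $P$. Say a dyadic rational $b\in[0,1)$ ''has $n$ digits'' if its base-2 expansion needs exactly $n$ digits counting the digit before the point: $b=0$ has $1$ digit, and for $n\ge2$ the numbers with $n$ digits are $k/2^{n-1}$ with $k$ odd. Posets $P_b$ (with $|P_b|$ equal to the number of digits of $b$), together with distinguished elements $L_b,R_b$, are defined recursively. $P_0$ is a single element $R_0$ (no $L_0$). $P_{1/2}$ is the two-element chain $L_{1/2}<R_{1/2}$. For $n\ge2$ and $b$ with $n$ digits: (i) $P_{b-2^{-n}}$ is obtained from $P_b$ by adding a new element $x$ that lies below every element of $P_b$ except $L_b$, with which it is incomparable; set $R_{b-2^{-n}}=x$, $L_{b-2^{-n}}=L_b$. (ii) $P_{b+2^{-n}}$ is obtained from $P_b$ by adding a new element $x$ that lies below every element of $P_b$ except $R_b$ if $R_b$ is minimal in $P_b$ (in which case $x$ and $R_b$ are incomparable), and below every element of $P_b$ if $R_b$ is not minimal; set $L_{b+2^{-n}}=x$, $R_{b+2^{-n}}=R_b$. (In all cases $L_b$ is minimal in $P_b$.) *)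

From mathcomp Require Import all_boot all_fingroup.
Set Implicit Arguments. Unset Strict Implicit. Unset Printing Implicit Defensive.

(* A finite poset on the ground set {0, ..., card-1}; [rel x y] means x <= y.
   [Lp] and [Rp] are the distinguished elements L_b, R_b. *)
Record dposet := DPoset { card : nat; rel : nat -> nat -> bool; Lp : nat; Rp : nat }.

Definition ext (P : dposet) : nat :=
  #|[set s : {perm 'I_(card P)} |
      [forall x : 'I_(card P), forall y : 'I_(card P),
         rel P x y ==> (s x <= s y)]]|.

(* P_0 : a single element R_0 (L_0 does not exist; the field is a dummy). *)
Definition P0 : dposet := DPoset 1 (fun a b => a == b) 0 0.
Definition Phalf : dposet := DPoset 2 (fun a b => a <= b) 0 1.

(* Add a new element x (index card P) lying below every element of P except
   the element e (if e = Some y), with which it is incomparable. *)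
Definition add_below (P : dposet) (e : option nat) : nat -> nat -> bool :=
  fun a b =>
    if a == card P then (b == card P) || ((b < card P) && (Some b != e))
    else if b == card P then false else rel P a b.

(* Construction (i): P_{b - 2^{-n}} from P_b. *)
Definition opI (P : dposet) : dposet :=
  DPoset (card P).+1 (add_below P (Some (Lp P))) (Lp P) (card P).

Definition minimalb (P : dposet) (y : nat) : bool :=
  ~~ has (fun z => (z != y) && rel P z y) (iota 0 (card P)).

(* Construction (ii): P_{b + 2^{-n}} from P_b. *)
Definition opII (P : dposet) : dposet :=
  DPoset (card P).+1
    (add_below P (if minimalb P (Rp P) then Some (Rp P) else None))
    (card P) (Rp P).

(* [Praw m k] is P_b for b = k / 2^m in lowest terms (k odd if m >= 1).
   For m >= 2, b = k/2^m has m+1 digits and arises from its parent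
   b' = b + 2^{-m} (rule (i)) or b' = b - 2^{-m} (rule (ii)), where b' is the
   one of (k+1)/2^m, (k-1)/2^m whose reduced form has m digits. *)
Fixpoint Praw (m k : nat) : dposet :=
  match m with
  | 0 => P0
  | m'.+1 =>
      match m' with
      | 0 => Phalf
      | _ => if odd (k.+1)./2 then opI (Praw m' (k.+1)./2)
             else opII (Praw m' (k.-1)./2)
      end
  end.

(* Reduce k / 2^m to lowest terms (0 becomes 0/2^0). *)
Fixpoint dnorm (k m : nat) : nat * nat :=
  match m with
  | 0 => (k, 0)
  | m'.+1 => if odd k then (k, m'.+1) else dnorm k./2 m'
  end.

Definition Pb (k m : nat) : dposet := Praw (dnorm k m).2 (dnorm k m).1.

Definition extb (k m : nat) : nat := if k == 2 ^ m then 0 else ext (Pb k m).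

From mathcomp Require Import all_boot all_fingroup zify.
Set Implicit Arguments. Unset Strict Implicit. Unset Printing Implicit Defensive.

(* For a poset P and an element y, let first(P, y) be the number of linear
   extensions of P in which y comes first.  The whole argument rests on one
   local analysis: if Q arises from P by adding a new element x below every
   element except (possibly) one element y, then in a linear extension of Q
   either x comes first, or y comes first and x second.  Counting via the
   bijection between permutations of {0..c} fixing a position and
   permutations of {0..c-1} (lifting), this gives
     ext Q = ext P + first(P, y),  first(Q, x) = ext P,  first(Q, y) = first(P, y)
   and ext Q = ext P when x lies below everything.  Moreover a non-minimal
   element is never first.  By induction on the number of digits of b we then
   show the invariant
     ext P_b = first(P_b, L_b) + first(P_b, R_b),
     first(P_b, L_b) = ext P_{b-2^{1-n}},  first(P_b, R_b) = ext P_{b+2^{1-n}},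
   from which the theorem is immediate. *)

Definition linext (P : dposet) (s : {perm 'I_(card P)}) : bool :=
  [forall x : 'I_(card P), forall y : 'I_(card P), rel P x y ==> (s x <= s y)].
Arguments linext : clear implicits.

Definition ext_first (P : dposet) (y : nat) : nat :=
  #|[set s : {perm 'I_(card P)} | linext P s &&
      [exists i : 'I_(card P), (val i == y) && (val (s i) == 0)]]|.

Lemma extE (P : dposet) : ext P = #|[set s | linext P s]|.
Proof. by []. Qed.

Lemma lift_perm_surj n (i j : 'I_n.+1) (s : 'S_n.+1) :
  s i = j -> exists t : 'S_n, s = lift_perm i j t.
Proof.
move=> sij.
have s_lift_neq k : s (lift i k) != j.
  by rewrite -sij (inj_eq perm_inj) eq_sym neq_lift.
pose f k := odflt k (unlift j (s (lift i k))).
have fE k : lift j (f k) = s (lift i k).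
  rewrite /f; case: (unliftP j (s (lift i k))) (s_lift_neq k) => [u -> //|->].
  by rewrite eqxx.
have f_inj : injective f.
  by move=> a b fab; apply: (lift_inj (h := i)); apply: (@perm_inj _ s); rewrite -!fE fab.
exists (perm f_inj); apply/permP => x.
case: (unliftP i x) => [k ->|->]; last by rewrite lift_perm_id.
by rewrite lift_perm_lift permE fE.
Qed.

Lemma lift_perm_inj n (i j : 'I_n.+1) : injective (lift_perm i j).
Proof.
move=> s t st; apply/permP => k; apply: (lift_inj (h := j)).
by rewrite -!(lift_perm_lift i) st.
Qed.

Lemma card_lift_perm n (i j : 'I_n.+1) (A : {set 'S_n.+1}) :
  {in A, forall s : 'S_n.+1, s i = j} -> #|A| = #|[set t : 'S_n | lift_perm i j t \in A]|.
Proof.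
move=> Aij; rewrite -(card_imset _ (@lift_perm_inj _ i j)); apply: eq_card => s.
apply/idP/imsetP => [sA | [t]]; last by rewrite inE => tA ->.
by have [t st] := lift_perm_surj (Aij s sA); exists t; rewrite // inE -st.
Qed.

Lemma perm_first n (t : 'S_n) (y : nat) : y < n ->
  [forall b : 'I_n, (val b != y) ==> (0 < t b)] =
  [exists i : 'I_n, (val i == y) && (val (t i) == 0)].
Proof.
move=> yn; have n_pos : 0 < n by apply: leq_ltn_trans yn.
apply/forallP/existsP => [others_pos | [i /andP[/eqP iy /eqP ti0]] b].
  exists ((t^-1)%g (Ordinal n_pos)); rewrite permKV eqxx andbT.
  by apply/negPn/negP => /(implyP (others_pos _)); rewrite permKV.
apply/implyP; rewrite lt0n; apply: contraNneq => tb0.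
suff -> : b = i by rewrite iy.
by apply: (@perm_inj _ t); apply: val_inj; rewrite /= tb0 ti0.
Qed.

Lemma ext_first_nonminimal (P : dposet) (z y : nat) :
  z < card P -> z != y -> rel P z y -> ext_first P y = 0.
Proof.
move=> zc zy rzy; apply/eqP; rewrite cards_eq0; apply/eqP/setP => s; rewrite !inE.
apply/negP => /andP[ls /existsP[i /andP[/eqP iy /eqP si0]]].
have := implyP (forallP (forallP ls (Ordinal zc)) i); rewrite /= iy => /(_ rzy).
rewrite si0 leqn0 => /eqP szi.
have zi : Ordinal zc = i by apply: (@perm_inj _ s); apply: val_inj; rewrite /= szi si0.
by move: zy; rewrite -iy -zi eqxx.
Qed.

Section AddBelow.
Variables (P : dposet) (e : option nat) (L R : nat).
Local Notation c := (card P).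

(* P with a new element (index c) below every element except [e]; both
   constructions (i) and (ii) are of this form. *)
Definition add_elem : dposet := DPoset c.+1 (add_below P e) L R.
Local Notation Q := add_elem.
Local Notation xnew := (@ord_max c).

Lemma bump_old (a : 'I_c) : bump c a = a.
Proof. by rewrite /bump leqNgt ltn_ord. Qed.

Lemma rel_old_old (a b : 'I_c) : rel Q (lift xnew a) (lift xnew b) = rel P a b.
Proof. by rewrite /= /add_below !bump_old !ltn_eqF. Qed.

Lemma rel_old_new (a : 'I_c) : rel Q (lift xnew a) xnew = false.
Proof. by rewrite /= /add_below !bump_old (ltn_eqF (ltn_ord a)) eqxx. Qed.

Lemma rel_new_old (b : 'I_c) : rel Q xnew (lift xnew b) = (Some (val b) != e).
Proof. by rewrite /= /add_below !bump_old eqxx (ltn_eqF (ltn_ord b)) ltn_ord. Qed.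

Lemma linext_lift (j : 'I_c.+1) (t : 'S_c) :
  linext Q (lift_perm xnew j t) =
  linext P t && [forall b : 'I_c, (Some (val b) != e) ==> (j <= lift j (t b))].
Proof.
apply/idP/idP.
  move/forallP=> lsQ; apply/andP; split.
    apply/forallP=> a; apply/forallP=> b; apply/implyP=> rab.
    have := implyP (forallP (lsQ (lift xnew a)) (lift xnew b)).
    by rewrite rel_old_old rab !lift_perm_lift /= leq_bump2 => /(_ isT).
  apply/forallP=> b; apply/implyP=> hb.
  have := implyP (forallP (lsQ xnew) (lift xnew b)).
  by rewrite rel_new_old hb lift_perm_lift lift_perm_id => /(_ isT).
case/andP=> /forallP ltP /forallP above; apply/forallP=> a; apply/forallP=> b.
case: (unliftP xnew a) => [a' ->|->]; case: (unliftP xnew b) => [b' ->|->].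
- rewrite rel_old_old !lift_perm_lift /= leq_bump2; exact: (forallP (ltP a') b').
- by rewrite rel_old_new.
- by rewrite rel_new_old lift_perm_lift lift_perm_id; exact: above.
- by rewrite leqnn implybT.
Qed.

Lemma card_new_first : #|[set s | linext Q s && (s xnew == ord0)]| = ext P.
Proof.
rewrite (@card_lift_perm _ xnew ord0) => [|s]; last by rewrite inE => /andP[_ /eqP].
rewrite extE; apply: eq_card => t; rewrite !inE linext_lift lift_perm_id eqxx andbT.
by case: (linext P t) => //=; apply/forallP => b; apply/implyP.
Qed.

Lemma ext_first_new : ext_first Q c = ext P.
Proof.
rewrite -card_new_first /ext_first; apply: eq_card => s; rewrite !inE.
case: (linext Q s) => //=; apply/existsP/eqP => [[i /andP[/eqP ic /eqP si0]] | sx0].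
  by rewrite (_ : xnew = i) ?(val_inj _ _ si0) //; apply: val_inj.
by exists xnew; rewrite /= eqxx sx0.
Qed.

Lemma new_before (s : 'S_c.+1) (w : 'I_c.+1) : linext Q s ->
  w != xnew -> Some (val w) != e -> s xnew <= s w.
Proof.
move=> ls; case: (unliftP xnew w) => [w' ->|->]; last by rewrite eqxx.
move=> _; rewrite /= bump_old => hw.
have := implyP (forallP (forallP ls xnew) (lift xnew w')).
by rewrite rel_new_old hw => /(_ isT).
Qed.

Lemma ext_add_below_all : e = None -> ext Q = ext P.
Proof.
move=> eN; rewrite -card_new_first extE; apply: eq_card => s; rewrite !inE.
case ls : (linext Q s) => //=; apply/esym/eqP.
pose z := (s^-1)%g ord0; have sz : s z = ord0 by rewrite permKV.
have [<- //|zx] := eqVneq z xnew.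
have := new_before ls zx; rewrite eN sz leqn0 => /(_ isT) /eqP sx0.
exact: val_inj.
Qed.

Section Incomparable.
Variable y : nat.
Hypotheses (ey : e = Some y) (yc : y < c).

Let c_pos : 0 < c := leq_ltn_trans (leq0n y) yc.
Let second : 'I_c.+1 := @Ordinal c.+1 1 c_pos.

Lemma card_new_second : #|[set s | linext Q s && (s xnew == second)]| = ext_first P y.
Proof.
rewrite (@card_lift_perm _ xnew second) => [|s]; last by rewrite inE => /andP[_ /eqP].
apply: eq_card => t; rewrite !inE linext_lift lift_perm_id eqxx andbT ey.
rewrite -(perm_first t yc); congr (_ && _); apply: eq_forallb => b.
by rewrite (inj_eq (@Some_inj _)); case: (t b) => -[].
Qed.

Lemma new_not_first (s : 'S_c.+1) : linext Q s -> s xnew != ord0 ->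
  s xnew = second /\ val ((s^-1)%g ord0) = y.
Proof.
move=> ls sx0; have sx_pos : 0 < s xnew.
  by rewrite lt0n; move: sx0; rewrite -(inj_eq val_inj).
pose z := (s^-1)%g ord0; have sz : s z = ord0 by rewrite permKV.
have zx : z != xnew by apply: contra sx0 => /eqP <-; rewrite sz.
have zy : val z = y.
  apply/eqP/negPn/negP => zy; have := new_before ls zx.
  by rewrite ey (inj_eq (@Some_inj _)) zy sz leqNgt sx_pos => /(_ isT).
split=> //; pose w := (s^-1)%g second; have sw : s w = second by rewrite permKV.
have [<- //|wx] := eqVneq w xnew.
have wy : val w != y.
  apply/eqP => wy; have wz : w = z by apply: val_inj; rewrite /= wy zy.
  by move: sw; rewrite wz sz => /(congr1 val).
have := new_before ls wx; rewrite ey (inj_eq (@Some_inj _)) wy sw => /(_ isT) sx_le1.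
by apply/val_inj/eqP; rewrite eqn_leq sx_le1.
Qed.

Lemma y_first_iff (s : 'S_c.+1) : linext Q s ->
  [exists i : 'I_c.+1, (val i == y) && (val (s i) == 0)] = (s xnew == second).
Proof.
move=> ls; apply/existsP/eqP => [[i /andP[/eqP iy /eqP si0]] | sx].
  apply: (proj1 (new_not_first ls _)); apply: contraTneq yc => sx0.
  rewrite -iy (_ : i = xnew) ?ltnn //.
  by apply: (@perm_inj _ s); apply: val_inj; rewrite sx0 /= si0.
have sx0 : s xnew != ord0 by rewrite sx -(inj_eq val_inj).
have [_ zy] := new_not_first ls sx0.
by exists ((s^-1)%g ord0); rewrite zy eqxx permKV.
Qed.

(* Splitting by whether xnew comes first or second. *)
Lemma ext_add_incomparable : ext Q = ext P + ext_first P y.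
Proof.
rewrite -card_new_first -card_new_second extE.
rewrite -[LHS](cardsID [set s : 'S_c.+1 | s xnew == ord0]).
congr (_ + _); apply: eq_card => s; rewrite !inE; first by rewrite andbC.
case ls : (linext Q s); rewrite ?andbT ?andbF //.
apply/idP/eqP => [sx0 | ->]; last by rewrite -(inj_eq val_inj).
exact: (proj1 (new_not_first ls sx0)).
Qed.

Lemma ext_first_old : ext_first Q y = ext_first P y.
Proof.
rewrite -card_new_second /ext_first; apply: eq_card => s; rewrite !inE.
by case ls : (linext Q s) => //=; rewrite y_first_iff.
Qed.

End Incomparable.
End AddBelow.

Lemma ext_P0 : ext P0 = 1.
Proof.
rewrite extE (_ : [set s | linext P0 s] = [set: 'S_1]) ?cardsT ?card_Sn //.
apply/setP => s; rewrite !inE; apply/forallP => x; apply/forallP => y.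
by apply/implyP => /eqP /val_inj ->.
Qed.

Lemma linext_Phalf : [set s | linext Phalf s] = [set 1%g].
Proof.
apply/setP => s; rewrite !inE; apply/idP/eqP => [ls | ->]; last first.
  by apply/forallP => x; apply/forallP => y; rewrite !perm1; apply/implyP.
have le01 := implyP (forallP (forallP ls ord0) ord_max) isT.
have ne01 : val (s ord0) != s ord_max by rewrite (inj_eq val_inj) (inj_eq perm_inj).
have lt0 := ltn_ord (s ord0); have lt1 := ltn_ord (s ord_max).
move: le01 ne01 lt0 lt1 => /= le01 ne01 lt0 lt1.
apply/permP => -[[|[|x]] hx] //; rewrite perm1; apply: val_inj.
  by rewrite (_ : Ordinal hx = ord0) /=; [lia | exact: val_inj].
by rewrite (_ : Ordinal hx = ord_max) /=; [lia | exact: val_inj].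
Qed.

Lemma ext_Phalf : ext Phalf = 1.
Proof. by rewrite extE linext_Phalf cards1. Qed.

Lemma ext_first_Phalf_L : ext_first Phalf 0 = 1.
Proof.
rewrite /ext_first -(cards1 (1%g : 'S_2)) -linext_Phalf; apply: eq_card => s.
rewrite !inE; case ls : (linext Phalf s) => //=.
have : s \in [set s | linext Phalf s] by rewrite inE.
by rewrite linext_Phalf inE => /eqP ->; apply/existsP; exists ord0; rewrite perm1.
Qed.

Lemma ext_first_Phalf_R : ext_first Phalf 1 = 0.
Proof. exact: (@ext_first_nonminimal _ 0). Qed.

Lemma extb_double a m : extb a.*2 m.+1 = extb a m.
Proof.
rewrite /extb expnS -mul2n eqn_pmul2l // /Pb mul2n.
by rewrite (_ : dnorm a.*2 m.+1 = dnorm a m) // /= odd_double doubleK.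
Qed.

(* For odd k, k / 2^(m+1) is already in lowest terms and is not 1. *)
Lemma extb_odd k m : odd k -> extb k m.+1 = ext (Praw m.+1 k).
Proof.
move=> ok; rewrite /extb /Pb /= ok.
by case: eqP => // ke; move: ok; rewrite ke oddX.
Qed.

Definition ext_split (P : dposet) (a b : nat) : Prop :=
  [/\ ext P = ext_first P (Lp P) + ext_first P (Rp P),
      ext_first P (Lp P) = a, ext_first P (Rp P) = b,
      Lp P < card P & Rp P < card P].

(* Construction (i) keeps the count of L and makes R the new element. *)
Lemma ext_split_opI P a b : ext_split P a b -> ext_split (opI P) a (ext P).
Proof.
case=> _ La _ Lc _; have QE : opI P = add_elem P (Some (Lp P)) (Lp P) (card P) by [].
rewrite /ext_split QE /= (@ext_add_incomparable _ _ _ _ (Lp P)) //.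
rewrite (@ext_first_old _ _ _ _ (Lp P)) // ext_first_new.
by split; rewrite 1?addnC // ltnW.
Qed.

(* Construction (ii) keeps the count of R and makes L the new element. *)
Lemma ext_split_opII P a b : ext_split P a b -> ext_split (opII P) (ext P) b.
Proof.
case=> _ _ Rb _ Rc; rewrite /ext_split /opII.
case: ifP => [_ | /negbT]; set Q := DPoset _ _ _ _.
  have QE : Q = add_elem P (Some (Rp P)) (card P) (Rp P) by [].
  rewrite QE /= (@ext_add_incomparable _ _ _ _ (Rp P)) //.
  by rewrite (@ext_first_old _ _ _ _ (Rp P)) // ext_first_new Rb; split => //; apply: ltnW.
move=> /negPn /hasP[z]; rewrite mem_iota add0n => /andP[_ zc] /andP[zR rzR].
have b0 : b = 0 by rewrite -Rb (ext_first_nonminimal zc zR rzR).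
have Q_Rb : ext_first Q (Rp P) = b.
  rewrite b0 (@ext_first_nonminimal _ z) //=; first exact: ltnW.
  by rewrite /add_below (ltn_eqF zc) (ltn_eqF Rc).
have QE : Q = add_elem P None (card P) (Rp P) by [].
rewrite -[Rp Q]/(Rp P) -[Lp Q]/(card P) -[card Q]/(card P).+1 Q_Rb QE.
rewrite ext_add_below_all // ext_first_new b0 addn0; split => //; exact: ltnW.
Qed.

Lemma Praw_step m k : Praw m.+2 k =
  if odd k.+1./2 then opI (Praw m.+1 k.+1./2) else opII (Praw m.+1 k.-1./2).
Proof. by []. Qed.

Lemma ext_split_Praw m k : odd k -> k < 2 ^ m.+1 ->
  ext_split (Praw m.+1 k) (extb k.-1 m.+1) (extb k.+1 m.+1).
Proof.
elim: m k => [|m IH] k ok kb.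
  have -> : k = 1 by move: ok kb; rewrite expn1; case: k => [|[|k]].
  split=> //; rewrite /= ?ext_Phalf ?ext_first_Phalf_L ?ext_first_Phalf_R //.
  by rewrite /extb /Pb /= ext_P0.
have [h kE] : exists h, k = h.*2.+1 by exists k./2; rewrite -[LHS]odd_double_half ok add1n.
subst k; have hb : h < 2 ^ m.+1 by move: kb; rewrite (expnS 2 m.+1) mul2n; lia.
rewrite Praw_step -[(h.*2.+1).-1]/h.*2 -[h.*2.+1.+1]/h.+1.*2 !doubleK !extb_double.
case: ifP => [oh | /negbT oh].
  have hb1 : h.+1 < 2 ^ m.+1.
    by rewrite ltn_neqAle hb andbT; apply: contraTneq oh => ->; rewrite oddX.
  by rewrite (extb_odd _ oh); apply: ext_split_opI (IH _ oh hb1).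
have oh' : odd h by rewrite /= in oh; exact: negbNE.
by rewrite (extb_odd _ oh'); apply: ext_split_opII (IH _ oh' hb).
Qed.

Theorem proposition3p1 (n k : nat) :
  2 <= n -> odd k -> k < 2 ^ n.-1 ->
  extb k n.-1 = extb k.-1 n.-1 + extb k.+1 n.-1.
Proof.
case: n => [|[|m]] // _ ok kb.
have [split_ext L_first R_first _ _] := ext_split_Praw ok kb.
by rewrite /= extb_odd // split_ext L_first R_first.
Qed.
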